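(* Let $\mu$ be a valuation on $\mathrm{Spec}(R)$ and $f\in R$, $f\ge0$. If $r<r'<s'<s$ are rationals and $p<q$ are rationals, then $p<\Delta(r,s)$ or $\Delta[r',s']<q$.
   Context: $R$ is a Riesz space over $\mathbb{Q}$ with strong unit $1$; rationals identified with multiples of $1$. $\mathrm{Spec}(R)$ is the distributive lattice generated by $D(a)$, $a\in R$, subject to $D(1)=1$; $D(a)\wedge D(-a)=0$; $D(a+b)\le D(a)\vee D(b)$; $D(a)=0$ if $a\le0$; $D(a\vee b)=D(a)\vee D(b)$. A valuation is a map $\mu$ from $\mathrm{Spec}(R)$ to nonnegative lower reals (inhabited, downward closed, rounded sets of rationals; $p<x$ means $p\in x$) with $\mu(0)=0$, $\mu(1)=1$, $\mu(x)+\mu(y)=\mu(x\vee y)+\mu(x\wedge y)$, monotone, and $\mu(D(a))\le\bigvee_{\varepsilon>0}\mu(D(a-\varepsilon))$. $\Delta(r,s):=\mu(D(f-r)\wedge D(s-f))$ (lower real) and $\Delta[r,s]$ is the upper real $1-\mu(D(r-f))-\mu(D(f-s))$. *)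

From HB Require Import structures.
From mathcomp Require Import all_boot all_order all_algebra.
Set Implicit Arguments. Unset Strict Implicit. Unset Printing Implicit Defensive.
Import Order.TTheory GRing.Theory Num.Theory.
Local Open Scope ring_scope.

Record riesz := Riesz {
  rcar :> lmodType rat;
  rle : rcar -> rcar -> Prop;
  rjoin : rcar -> rcar -> rcar;
  rmeet : rcar -> rcar -> rcar;
  runit : rcar;
  rle_refl : forall a, rle a a;
  rle_anti : forall a b, rle a b -> rle b a -> a = b;
  rle_trans : forall a b c, rle a b -> rle b c -> rle a c;
  rle_add : forall a b c, rle a b -> rle (a + c) (b + c);
  rle_scale : forall (l : rat) a b, 0 <= l -> rle a b -> rle (l *: a) (l *: b);
  rjoin_ubl : forall a b, rle a (rjoin a b);
  rjoin_ubr : forall a b, rle b (rjoin a b);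
  rjoin_lub : forall a b c, rle a c -> rle b c -> rle (rjoin a b) c;
  rmeet_lbl : forall a b, rle (rmeet a b) a;
  rmeet_lbr : forall a b, rle (rmeet a b) b;
  rmeet_glb : forall a b c, rle c a -> rle c b -> rle c (rmeet a b);
  runit_ge0 : rle 0 runit;
  runit_strong : forall a, exists n : nat, rle a (n%:R *: runit)
}.

Definition rq (R : riesz) (r : rat) : R := r *: runit R.

(* ---------- Spec(R): presentation relations ----------
   Spec(R) is the bounded distributive lattice generated by the D(a) subject
   to the relations below.  We quantify over any bounded distributive lattice
   L with a map D satisfying the relations. *)
Definition spec_rel (R : riesz) (d : Order.disp_t) (L : tbDistrLatticeType d)
    (D : R -> L) : Prop :=
  [/\ D (runit R) = \top%O,
      forall a, (D a `&` D (- a))%O = \bot%O,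
      forall a b, (D (a + b) <= D a `|` D b)%O,
      forall a, rle a 0 -> D a = \bot%O
    & forall a b, D (rjoin a b) = (D a `|` D b)%O].

(* a lower real is a set of rationals; p < x means x p *)
Definition lreal := rat -> Prop.

Definition is_lreal (x : lreal) : Prop :=
  [/\ exists p, x p,
      forall p q, q <= p -> x p -> x q
    & forall p, x p -> exists q, p < q /\ x q].

Definition lnonneg (x : lreal) : Prop := forall p, p < 0 -> x p.

Definition lconst (c : rat) : lreal := fun p => p < c.

Definition ladd (x y : lreal) : lreal :=
  fun p => exists a b, [/\ x a, y b & p < a + b].

Definition lle (x y : lreal) : Prop := forall p, x p -> y p.

Definition leq_lr (x y : lreal) : Prop := forall p, x p <-> y p.

Definition valuation (R : riesz) (d : Order.disp_t) (L : tbDistrLatticeType d)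
    (D : R -> L) (mu : L -> lreal) : Prop :=
  (forall x, is_lreal (mu x) /\ lnonneg (mu x)) /\
  [/\ leq_lr (mu \bot%O) (lconst 0),
      leq_lr (mu \top%O) (lconst 1),
      forall x y, leq_lr (ladd (mu x) (mu y)) (ladd (mu (x `|` y)%O) (mu (x `&` y)%O)),
      forall x y, (x <= y)%O -> lle (mu x) (mu y)
    & forall a, lle (mu (D a))
        (fun p => exists eps : rat, 0 < eps /\ mu (D (a - rq R eps)) p)].

Definition Delta_lo (R : riesz) (d : Order.disp_t) (L : tbDistrLatticeType d)
    (D : R -> L) (mu : L -> lreal) (f : R) (r s : rat) : lreal :=
  mu (D (f - rq R r) `&` D (rq R s - f))%O.

(* Delta[r,s] = 1 - mu(D(r-f)) - mu(D(f-s)), an upper real;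
   Delta[r,s] < q  iff  1 - q < mu(D(r-f)) + mu(D(f-s)). *)
Definition Delta_up_lt (R : riesz) (d : Order.disp_t) (L : tbDistrLatticeType d)
    (D : R -> L) (mu : L -> lreal) (f : R) (r s : rat) (q : rat) : Prop :=
  ladd (mu (D (rq R r - f))) (mu (D (f - rq R s))) (1 - q).

From HB Require Import structures.
From mathcomp Require Import all_boot all_order all_algebra.
Set Implicit Arguments. Unset Strict Implicit. Unset Printing Implicit Defensive.
Import Order.TTheory GRing.Theory Num.Theory.
Local Open Scope ring_scope.

(* Write P = D(f-r), Q = D(s-f), B1 = D(r'-f), B2 = D(f-s').  Since
   (f-r) + (r'-f) = r'-r is a positive rational, the relations of Spec(R)
   force P \/ B1 = 1, and likewise Q \/ B2 = 1; by distributivity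
   (P /\ Q) \/ (B1 \/ B2) = 1.  A valuation is subadditive on joins
   (modularity plus nonnegativity), so
     1 - q + p < 1 = mu(1) <= mu(P /\ Q) + mu(B1 \/ B2) <= mu(P /\ Q) + mu(B1) + mu(B2).
   Lower reals are located with respect to splittings of a sum: from
   p + (1-q) < x + y we get p < x or 1-q < y, which is the claim. *)

Section SpecRelations.
Variables (R : riesz) (d : Order.disp_t) (L : tbDistrLatticeType d) (D : R -> L).
Hypothesis HD : spec_rel D.

(* D is monotone: a <= b gives a = b + (a-b) with a-b <= 0, so D(a-b) = 0. *)
Lemma D_mono (a b : R) : rle a b -> (D a <= D b)%O.
Proof.
case: HD => _ _ Dadd Dnonpos _ le_ab.
have -> : a = b + (a - b) by rewrite addrC subrK.
apply: le_trans (Dadd _ _) _.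
have -> : D (a - b) = \bot%O.
  by apply: Dnonpos; have := rle_add (- b) le_ab; rewrite subrr.
by rewrite joinx0.
Qed.

Lemma D_natscale (n : nat) (a : R) : (D ((n%:R : rat) *: a) <= D a)%O.
Proof.
case: HD => _ _ Dadd Dnonpos _.
elim: n => [|n IH]; first by rewrite scale0r Dnonpos ?le0x //; apply: rle_refl.
rewrite -natr1 scalerDl scale1r addrC.
by apply: le_trans (Dadd _ _) _; rewrite leUx lexx.
Qed.

(* A positive rational c has D(c) = 1: some multiple of c dominates the unit. *)
Lemma D_rat_pos (c : rat) : 0 < c -> D (rq R c) = \top%O.
Proof.
move=> c_gt0; apply/le_anti; rewrite lex1 /=.
case: HD => Dunit _ _ _ _; rewrite -Dunit.
set n := `|denq c|%N.
apply: le_trans (D_natscale n (rq R c)); apply: D_mono.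
have excess_ge0 : 0 <= (n%:R : rat) * c - 1.
  by rewrite subr_ge0 /n natr_absz gtr0_norm ?denq_gt0 // mulrC -numqE ler1z
    -gtz0_ge1 numq_gt0.
have := rle_add (runit R) (rle_scale excess_ge0 (runit_ge0 R)).
by rewrite scaler0 add0r scalerBl scale1r subrK /rq scalerA.
Qed.

Lemma D_cover (a b : R) (c : rat) :
  0 < c -> a + b = rq R c -> (D a `|` D b)%O = \top%O.
Proof.
move=> c_gt0 sum_ab; apply/le_anti; rewrite lex1 /=.
case: HD => _ _ Dadd _ _.
by rewrite -(D_rat_pos c_gt0) -sum_ab Dadd.
Qed.

End SpecRelations.

Lemma meet_join_top (d : Order.disp_t) (L : tbDistrLatticeType d) (x y z w : L) :
  (x `|` y)%O = \top%O -> (z `|` w)%O = \top%O ->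
  ((x `&` z) `|` (y `|` w))%O = \top%O.
Proof.
move=> xy_top zw_top; apply/le_anti; rewrite lex1 /= joinIl lexI.
apply/andP; split.
  by rewrite -xy_top leUx leUl /= (le_trans (leUl y w) (leUr _ x)).
by rewrite -zw_top leUx leUl /= (le_trans (leUr w y) (leUr _ z)).
Qed.

Lemma ladd_nonneg (x y : lreal) :
  is_lreal x -> lnonneg y -> lle x (ladd x y).
Proof.
case=> _ _ x_round y_nonneg t xt.
have [a [lt_ta xa]] := x_round t xt.
exists a, ((t - a) / 2%:R); split => //.
  by apply: y_nonneg; rewrite pmulr_llt0 // subr_lt0.
have gap_lt0 : t - a < 0 by rewrite subr_lt0.
rewrite -[t in t < _](subrK a) addrC ltrD2l ltr_pdivlMr // mulr_natr mulr2n.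
by rewrite gtrDr.
Qed.

Lemma ladd_located (x y : lreal) (u v : rat) :
  is_lreal x -> is_lreal y -> ladd x y (u + v) -> x u \/ y v.
Proof.
case=> _ x_down _ [_ y_down _] [a [b [xa yb lt_sum]]].
have [le_ua | lt_au] := lerP u a; first by left; exact: x_down xa.
right; apply: y_down yb; apply: ltW.
by rewrite -(ltrD2l u); apply: lt_trans lt_sum _; rewrite ltrD2r.
Qed.

Section Valuations.
Variables (R : riesz) (d : Order.disp_t) (L : tbDistrLatticeType d).
Variables (D : R -> L) (mu : L -> lreal).
Hypothesis Hmu : valuation D mu.

Lemma mu_lreal (x : L) : is_lreal (mu x).
Proof. by case: Hmu => mu_ok _; case: (mu_ok x). Qed.

(* Valuations are subadditive: mu(x \/ y) <= mu(x) + mu(y), by modularity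
   and nonnegativity of mu(x /\ y). *)
Lemma mu_join_subadd (x y : L) : lle (mu (x `|` y)%O) (ladd (mu x) (mu y)).
Proof.
case: Hmu => mu_ok [_ _ mu_modular _ _] t join_t.
apply/mu_modular/ladd_nonneg; [exact: mu_lreal | exact: (mu_ok _).2 | exact: join_t].
Qed.

End Valuations.

Theorem lemma4p11 (R : riesz) (d : Order.disp_t) (L : tbDistrLatticeType d)
    (D : R -> L) (mu : L -> lreal)
    (HD : spec_rel D) (Hmu : valuation D mu)
    (f : R) (hf : rle 0 f)
    (r r' s' s p q : rat)
    (hrr' : r < r') (hr's' : r' < s') (hs's : s' < s) (hpq : p < q) :
  Delta_lo D mu f r s p \/ Delta_up_lt D mu f r' s' q.
Proof.
rewrite /Delta_lo /Delta_up_lt.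
set P := D (f - rq R r); set Q := D (rq R s - f).
set B1 := D (rq R r' - f); set B2 := D (f - rq R s').
have PB1_top : (P `|` B1)%O = \top%O.
  apply: (D_cover HD (c := r' - r)); first by rewrite subr_gt0.
  by rewrite addrC addrA subrK /rq scalerBl.
have QB2_top : (Q `|` B2)%O = \top%O.
  apply: (D_cover HD (c := s - s')); first by rewrite subr_gt0.
  by rewrite addrA subrK /rq scalerBl.
have mu_top : mu \top%O (p + (1 - q)).
  case: Hmu => _ [_ mu_one _ _ _]; apply/mu_one.
  by rewrite /lconst addrCA gtrDl subr_lt0.
rewrite -(meet_join_top PB1_top QB2_top) in mu_top.
have [PQ_p | B1B2_q] := ladd_located (mu_lreal Hmu _) (mu_lreal Hmu _)
  (mu_join_subadd Hmu mu_top); first by left.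
by right; exact: (mu_join_subadd Hmu (x := B1) (y := B2) B1B2_q).
Qed.
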